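(* Let $\langle X,d_X\rangle$ and $\langle Y,d_Y\rangle$ be metric spaces with completions $\langle X^*,d^*_X,\iota_X\rangle$ and $\langle Y^*,d^*_Y,\iota_Y\rangle$, and let $\hat f:X^*\to Y^*$ be continuous. (a) There is a continuous $f:\langle X,d_X\rangle\to\langle Y,d_Y\rangle$ with $\iota_Y\circ f=\hat f\circ\iota_X$ if and only if $\operatorname{ran}(\hat f\circ\iota_X)\subseteq\operatorname{ran}\iota_Y$. Moreover, such $f$ is unique and it is Cauchy-continuous. (b) There exist a cardinal $\eta\leq|X|+|Y|$, a metric $d'$ on $\eta$, and dense isometries $\iota:\langle Y,d_Y\rangle\to\langle\eta,d'\rangle$ and $\iota':\langle\eta,d'\rangle\to\langle Y^*,d^*_Y\rangle$ such that $\operatorname{ran}(\hat f\circ\iota_X)\subseteq\operatorname{ran}\iota'$.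
   Context: A dense isometry is a distance-preserving map (not necessarily onto) with dense image. A completion of $\langle X,d\rangle$ is a triple $\langle X^*,d^*,\iota\rangle$ with $\langle X^*,d^*\rangle$ complete and $\iota$ a dense isometry from $\langle X,d\rangle$ into it. A function between metric spaces is Cauchy-continuous if it maps Cauchy sequences to Cauchy sequences. *)

From Stdlib Require Import Reals.
Open Scope R_scope.

Definition is_metric {T : Type} (d : T -> T -> R) : Prop :=
  (forall x y, 0 <= d x y) /\
  (forall x y, d x y = 0 <-> x = y) /\
  (forall x y, d x y = d y x) /\
  (forall x y z, d x z <= d x y + d y z).

Definition cauchy_seq {T : Type} (d : T -> T -> R) (u : nat -> T) : Prop :=
  forall eps, 0 < eps -> exists N, forall m n, (N <= m)%nat -> (N <= n)%nat -> d (u m) (u n) < eps.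

Definition seq_converges_to {T : Type} (d : T -> T -> R) (u : nat -> T) (l : T) : Prop :=
  forall eps, 0 < eps -> exists N, forall n, (N <= n)%nat -> d (u n) l < eps.

Definition complete {T : Type} (d : T -> T -> R) : Prop :=
  forall u, cauchy_seq d u -> exists l, seq_converges_to d u l.

Definition isometry {T U : Type} (dT : T -> T -> R) (dU : U -> U -> R) (i : T -> U) : Prop :=
  forall x y, dU (i x) (i y) = dT x y.

Definition dense_image {T U : Type} (dU : U -> U -> R) (i : T -> U) : Prop :=
  forall y eps, 0 < eps -> exists x, dU y (i x) < eps.

Definition dense_isometry {T U : Type} (dT : T -> T -> R) (dU : U -> U -> R) (i : T -> U) : Prop :=
  isometry dT dU i /\ dense_image dU i.

Definition is_completion {X Xs : Type} (d : X -> X -> R) (ds : Xs -> Xs -> R) (i : X -> Xs) : Prop :=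
  is_metric ds /\ complete ds /\ dense_isometry d ds i.

Definition continuous_map {T U : Type} (dT : T -> T -> R) (dU : U -> U -> R) (f : T -> U) : Prop :=
  forall x eps, 0 < eps -> exists delta, 0 < delta /\ forall y, dT x y < delta -> dU (f x) (f y) < eps.

Definition cauchy_continuous {T U : Type} (dT : T -> T -> R) (dU : U -> U -> R) (f : T -> U) : Prop :=
  forall u, cauchy_seq dT u -> cauchy_seq dU (fun n => f (u n)).

Definition in_range {T U : Type} (g : T -> U) (y : U) : Prop := exists x, g x = y.

(* Since i_Y is an injective isometry, a lift f of fhat o i_X is determined by
   fhat, exists exactly when fhat o i_X lands in ran i_Y, and inherits
   continuity and Cauchy-continuity from fhat: fhat is Cauchy-continuous because
   a Cauchy sequence of X is mapped by i_X to a convergent sequence of the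
   complete space X*.  For (b) take for eta the subspace ran i_Y U ran (fhat o i_X)
   of Y*: choosing a preimage of each point injects it into X + Y, and it sits
   densely between Y and Y* because ran i_Y is already dense in Y*. *)

From Stdlib Require Import Reals Lra ClassicalEpsilon ProofIrrelevance.
Open Scope R_scope.

Lemma isometry_injective {T U : Type} (dT : T -> T -> R) (dU : U -> U -> R)
  (i : T -> U) :
  is_metric dT -> is_metric dU -> isometry dT dU i ->
  forall a b, i a = i b -> a = b.
Proof.
  intros [_ [dT0 _]] [_ [dU0 _]] Hi a b Hab.
  apply dT0. rewrite <- Hi, Hab. now apply dU0.
Qed.

Lemma isometry_cauchy_seq {T U : Type} (dT : T -> T -> R) (dU : U -> U -> R)
  (i : T -> U) (u : nat -> T) :
  isometry dT dU i -> cauchy_seq dT u -> cauchy_seq dU (fun n => i (u n)).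
Proof.
  intros Hi Hu eps Heps.
  destruct (Hu eps Heps) as [N HN].
  exists N. intros m n Hm Hn. rewrite Hi. now apply HN.
Qed.

Lemma continuous_map_seq_converges {T U : Type} (dT : T -> T -> R) (dU : U -> U -> R)
  (f : T -> U) (u : nat -> T) (l : T) :
  is_metric dT -> is_metric dU -> continuous_map dT dU f ->
  seq_converges_to dT u l -> seq_converges_to dU (fun n => f (u n)) (f l).
Proof.
  intros [_ [_ [dT_sym _]]] [_ [_ [dU_sym _]]] Hf Hu eps Heps.
  destruct (Hf l eps Heps) as [delta [Hdelta Hclose]].
  destruct (Hu delta Hdelta) as [N HN].
  exists N. intros n Hn.
  rewrite dU_sym. apply Hclose. rewrite dT_sym. now apply HN.
Qed.

Lemma seq_converges_cauchy {T : Type} (d : T -> T -> R) (u : nat -> T) (l : T) :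
  is_metric d -> seq_converges_to d u l -> cauchy_seq d u.
Proof.
  intros [_ [_ [d_sym d_tri]]] Hu eps Heps.
  destruct (Hu (eps / 2)) as [N HN]; [lra |].
  exists N. intros m n Hm Hn.
  specialize (HN m Hm) as Hml. specialize (HN n Hn) as Hnl.
  rewrite d_sym in Hnl.
  pose proof (d_tri (u m) l (u n)). lra.
Qed.

Lemma complete_continuous_cauchy_continuous {T U : Type}
  (dT : T -> T -> R) (dU : U -> U -> R) (f : T -> U) :
  is_metric dT -> is_metric dU -> complete dT ->
  continuous_map dT dU f -> cauchy_continuous dT dU f.
Proof.
  intros mT mU cT Hf u Hu.
  destruct (cT u Hu) as [l Hl].
  apply (seq_converges_cauchy dU _ (f l) mU).
  now apply (continuous_map_seq_converges dT).
Qed.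

Section IsometricFactor.

Context {T T' U U' : Type}.
Context {dT : T -> T -> R} {dT' : T' -> T' -> R}.
Context {dU : U -> U -> R} {dU' : U' -> U' -> R}.
Context {iT : T -> T'} {iU : U -> U'} {g : T' -> U'} {f : T -> U}.
Hypothesis iT_isometry : isometry dT dT' iT.
Hypothesis iU_isometry : isometry dU dU' iU.
Hypothesis f_lifts_g : forall x, iU (f x) = g (iT x).

Lemma continuous_map_isometric_factor :
  continuous_map dT' dU' g -> continuous_map dT dU f.
Proof.
  intros Hg x eps Heps.
  destruct (Hg (iT x) eps Heps) as [delta [Hdelta Hclose]].
  exists delta. split; [exact Hdelta |].
  intros y Hy. rewrite <- iU_isometry, !f_lifts_g.
  apply Hclose. now rewrite iT_isometry.
Qed.

Lemma cauchy_continuous_isometric_factor :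
  cauchy_continuous dT' dU' g -> cauchy_continuous dT dU f.
Proof.
  intros Hg u Hu eps Heps.
  destruct (Hg _ (isometry_cauchy_seq dT dT' iT u iT_isometry Hu) eps Heps) as [N HN].
  exists N. intros m n Hm Hn.
  rewrite <- iU_isometry, !f_lifts_g. now apply HN.
Qed.

End IsometricFactor.

Lemma proj1_sig_inj {U : Type} (P : U -> Prop) (a b : {z | P z}) :
  proj1_sig a = proj1_sig b -> a = b.
Proof. destruct a, b. simpl. apply subset_eq_compat. Qed.

Definition sub_dist {U : Type} (d : U -> U -> R) (P : U -> Prop)
  (a b : {z | P z}) : R :=
  d (proj1_sig a) (proj1_sig b).

Definition corestrict {T U : Type} (P : U -> Prop) (i : T -> U)
  (Hi : forall t, P (i t)) (t : T) : {z | P z} :=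
  exist P (i t) (Hi t).

Section Subspace.

Context {U : Type} {d : U -> U -> R} {P : U -> Prop}.

Lemma is_metric_sub_dist : is_metric d -> is_metric (sub_dist d P).
Proof.
  intros [d_ge0 [d_eq0 [d_sym d_tri]]].
  unfold sub_dist. split; [| split; [| split]].
  - intros; apply d_ge0.
  - intros a b. split.
    + intros H. now apply proj1_sig_inj, d_eq0.
    + intros ->. now apply d_eq0.
  - intros; apply d_sym.
  - intros; apply d_tri.
Qed.

Context {T : Type} {dT : T -> T -> R} {i : T -> U}.
Hypothesis i_dense_isometry : dense_isometry dT d i.
Hypothesis i_in_P : forall t, P (i t).

Lemma dense_isometry_corestrict :
  dense_isometry dT (sub_dist d P) (corestrict P i i_in_P).
Proof.
  destruct i_dense_isometry as [Hiso Hdense]. split.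
  - intros a b. apply Hiso.
  - intros [z Hz] eps Heps. apply (Hdense z eps Heps).
Qed.

Lemma dense_isometry_proj1_sig : dense_isometry (sub_dist d P) d (@proj1_sig U P).
Proof.
  destruct i_dense_isometry as [_ Hdense]. split.
  - intros a b. reflexivity.
  - intros z eps Heps.
    destruct (Hdense z eps Heps) as [t Ht].
    now exists (corestrict P i i_in_P t).
Qed.

End Subspace.

Lemma union_range_inj_sum {A B U : Type} (h : A -> U) (g : B -> U) :
  exists c : {z | in_range h z \/ in_range g z} -> (A + B)%type,
    forall e1 e2, c e1 = c e2 -> e1 = e2.
Proof.
  set (copair s := match s with inl a => h a | inr b => g b end).
  destruct (choice (fun (e : {z | in_range h z \/ in_range g z}) s => copair s = proj1_sig e))
    as [c Hc].
  { intros [z [[a Ha] | [b Hb]]]; [now exists (inl a) | now exists (inr b)]. }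
  exists c. intros e1 e2 Hc12.
  apply proj1_sig_inj. now rewrite <- Hc, <- Hc, Hc12.
Qed.

Theorem lemma4p3
  (X Y Xs Ys : Type)
  (dX : X -> X -> R) (dY : Y -> Y -> R)
  (dXs : Xs -> Xs -> R) (dYs : Ys -> Ys -> R)
  (iX : X -> Xs) (iY : Y -> Ys) (fhat : Xs -> Ys) :
  is_metric dX -> is_metric dY ->
  is_completion dX dXs iX -> is_completion dY dYs iY ->
  continuous_map dXs dYs fhat ->
  (* (a) *)
  ( ((exists f : X -> Y, continuous_map dX dY f /\ forall x, iY (f x) = fhat (iX x))
      <-> (forall x, in_range iY (fhat (iX x))))
    /\ (forall f g : X -> Y,
          continuous_map dX dY f -> (forall x, iY (f x) = fhat (iX x)) ->
          continuous_map dX dY g -> (forall x, iY (g x) = fhat (iX x)) ->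
          forall x, f x = g x)
    /\ (forall f : X -> Y,
          continuous_map dX dY f -> (forall x, iY (f x) = fhat (iX x)) ->
          cauchy_continuous dX dY f) )
  /\
  (* (b): eta is a set of cardinality <= |X| + |Y|, i.e. injects into X + Y *)
  (exists (E : Type) (card : E -> (X + Y)%type) (dE : E -> E -> R)
          (i : Y -> E) (i' : E -> Ys),
      (forall e1 e2, card e1 = card e2 -> e1 = e2) /\
      is_metric dE /\
      dense_isometry dY dE i /\ dense_isometry dE dYs i' /\
      (forall x, in_range i' (fhat (iX x)))).
Proof.
  intros mX mY [mXs [cXs [isoX _]]] [mYs [_ denseY]] Hfhat.
  pose proof (proj1 denseY) as isoY.
  split; [split; [| split] |].
  - split.
    + intros [f [_ Hf]] x. now exists (f x).
    + intros Hran. destruct (choice _ Hran) as [f Hf].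
      exists f. split; [| exact Hf].
      exact (continuous_map_isometric_factor isoX isoY Hf Hfhat).
  - intros f g _ Hf _ Hg x.
    apply (isometry_injective _ _ _ mY mYs isoY). now rewrite Hf, Hg.
  - intros f _ Hf.
    apply (cauchy_continuous_isometric_factor isoX isoY Hf).
    now apply complete_continuous_cauchy_continuous.
  - set (P z := in_range (fun x => fhat (iX x)) z \/ in_range iY z).
    assert (iY_in_P : forall y, P (iY y)) by (intros y; right; now exists y).
    destruct (union_range_inj_sum (fun x => fhat (iX x)) iY) as [card Hcard].
    exists {z | P z}, card, (sub_dist dYs P), (corestrict P iY iY_in_P), (@proj1_sig Ys P).
    split; [exact Hcard | split; [| split; [| split]]].
    + now apply is_metric_sub_dist.
    + apply dense_isometry_corestrict, denseY.
    + exact (dense_isometry_proj1_sig denseY iY_in_P).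
    + intros x. now exists (exist P (fhat (iX x)) (or_introl (ex_intro _ x eq_refl))).
Qed.
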